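(* Let $\omega$ be a character (non-zero complex homomorphism, not necessarily continuous) of $C(X)'_{00}$, and let $x\in X$ be the unique point such that $\omega$ restricted to $C(X)$ is evaluation at $x$. Then there exists a sequence $(c_k)_{k\in\mathbb{Z}}$ of complex numbers with $c_0=1$ such that $\omega(f\delta^k)=c_kf(x)$ for all $k\in\mathbb{Z}$ and all $f\in C(X)$ with $\mathrm{supp}(f)\subset\mathrm{Fix}_k(\sigma)$.
   Context: Let $X$ be a non-empty compact Hausdorff space and $\sigma:X\to X$ a homeomorphism; $\mathrm{Fix}_k(\sigma)=\{x:\sigma^kx=x\}$, $\mathrm{supp}(f)$ is the closure of $\{f\ne0\}$. $C(X)$ is the algebra of continuous complex functions. $c_{00}(\Sigma)$ is the unital algebra of finite formal sums $\sum_kf_k\delta^k$ ($f_k\in C(X)$) with multiplication determined by $f\delta^k\cdot g\delta^l=f\,(g\circ\sigma^{-k})\,\delta^{k+l}$ (a subalgebra of the twisted convolution algebra $\ell^1(\mathbb{Z},C(X))$ for the action $f\mapsto f\circ\sigma^{-1}$); $C(X)$ is embedded as $\{f\delta^0\}$. $C(X)'_{00}$ is the commutant of $C(X)$ in $c_{00}(\Sigma)$; it equals $\{\sum_kf_k\delta^k:\mathrm{supp}(f_k)\subset\mathrm{Fix}_k(\sigma)\ \forall k\}$ and is commutative. *)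

From HB Require Import structures.
From mathcomp Require Import all_boot all_order all_algebra.
From mathcomp Require Import all_classical all_reals all_analysis.
From mathcomp Require Import complex.
Set Implicit Arguments. Unset Strict Implicit. Unset Printing Implicit Defensive.
Import Order.TTheory GRing.Theory Num.Theory.
Import numFieldNormedType.Exports.
Local Open Scope classical_set_scope.
Local Open Scope ring_scope.
Local Open Scope complex_scope.

(* The homeomorphism sigma is given by s together with its inverse si.
   iterz s si k = sigma^k for k : int. *)
Definition iterz {X : Type} (s si : X -> X) (k : int) : X -> X :=
  match k with
  | Posz n => iter n s
  | Negz n => iter n.+1 si
  end.

Definition Fixk {X : Type} (s si : X -> X) (k : int) : set X :=
  [set x | iterz s si k x = x].

Definition supp {X : topologicalType} {R : rcfType} (f : X -> R[i]) : set X :=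
  closure [set x | f x != 0].

(* An element sum_k F_k delta^k of c_00(Sigma), represented by its
   coefficient family F : int -> (X -> C). *)
Definition in_c00 {X : topologicalType} {R : realType} (F : int -> X -> R[i]) : Prop :=
  (forall k, continuous (F k : X -> (R[i])^o)) /\ finite_set [set k | F k != (fun=> 0)].

Definition in_comm00 {X : topologicalType} {R : realType} (s si : X -> X)
  (F : int -> X -> R[i]) : Prop :=
  in_c00 F /\ forall k, supp (F k) `<=` Fixk s si k.

Definition mono {X : Type} {R : rcfType} (f : X -> R[i]) (k : int) : int -> X -> R[i] :=
  fun l => if l == k then f else (fun=> 0).

Definition c00_add {X : Type} {R : rcfType} (F G : int -> X -> R[i]) : int -> X -> R[i] :=
  fun k x => F k x + G k x.

Definition c00_scale {X : Type} {R : rcfType} (a : R[i]) (F : int -> X -> R[i]) : int -> X -> R[i] :=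
  fun k x => a * F k x.

(* Twisted convolution: (f delta^k)(g delta^l) = f (g o sigma^{-k}) delta^(k+l),
   i.e. (F G)_n = sum_k F_k (G_{n-k} o sigma^{-k}). *)
Definition c00_mul {X : Type} {R : rcfType} (s si : X -> X) (F G : int -> X -> R[i])
  : int -> X -> R[i] :=
  fun n x => (\sum_(k \in [set: int]) (F k x * G (n - k)%R (iterz s si (- k)%R x)))%R.

From HB Require Import structures.
From mathcomp Require Import all_boot all_order all_algebra.
From mathcomp Require Import all_classical all_reals all_analysis.
From mathcomp Require Import complex ring.
Set Implicit Arguments. Unset Strict Implicit. Unset Printing Implicit Defensive.
Import Order.TTheory GRing.Theory Num.Theory.
Import numFieldNormedType.Exports.
Local Open Scope classical_set_scope.
Local Open Scope ring_scope.

(* Since g delta^0 * f delta^k = (g f) delta^k, multiplicativity gives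
   omega((g f) delta^k) = g(x) omega(f delta^k).  Applied to two admissible
   f0, f this yields f0(x) omega(f delta^k) = f(x) omega(f0 delta^k), so
   omega(_ delta^k) is proportional to evaluation at x as soon as some
   admissible f0 has f0(x) <> 0.  Otherwise every admissible f vanishes at x,
   and omega(f delta^k) = 0 follows from the factorisation
   f = |f|^(1/2) * (f / |f|^(1/2)) into continuous functions, the second of
   which has support inside supp f. *)

Section Monomials.
Variables (R : realType) (X : topologicalType) (s si : X -> X).

Lemma in_comm00_mono (f : X -> R[i]) k : continuous (f : X -> (R[i])^o) ->
  supp f `<=` Fixk s si k -> in_comm00 s si (mono f k).
Proof.
move=> fc fs; split; first split.
- move=> l; rewrite /mono; case: (l == k) => //; exact: cst_continuous.
- apply: (@sub_finite_set _ _ [set k]); last exact: finite_set1.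
  by move=> l /=; rewrite /mono; case: (l =P k) => [->//|_]; rewrite eqxx.
- move=> l; rewrite /mono; case: (l =P k) => [->//|_] y.
  rewrite /supp (_ : [set _ | _] = set0) ?closure0 //.
  by rewrite eqxx; apply/seteqP; split.
Qed.

Lemma supp_Fixk0 (f : X -> R[i]) : supp f `<=` Fixk s si 0.
Proof. by []. Qed.

Lemma c00_mul_mono0l (g f : X -> R[i]) k :
  c00_mul s si (mono g 0) (mono f k) = mono (fun y => g y * f y) k.
Proof.
apply/funext => n; apply/funext => y; rewrite /c00_mul.
rewrite -(fsbig_widen [set 0] setT) //; last first.
  by move=> j [_ /= /eqP j0]; rewrite /mono ifN // mul0r.
rewrite fsbig_set1 /mono eqxx oppr0 subr0 /=.
by case: (n == k) => //; rewrite mulr0.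
Qed.

End Monomials.
Arguments supp_Fixk0 {R X} s si f.

Section SqrtFactorisation.
Variable R : realType.
Local Notation C := (R[i]).

Definition sqrt_norm (z : C) : C := sqrtC `|z|.
Definition sqrt_sgn (z : C) : C := z / sqrt_norm z.

Lemma sqrtC_dist (a b : C) : 0 <= a -> 0 <= b ->
  `|sqrtC a - sqrtC b| <= sqrtC `|a - b|.
Proof.
wlog ba : a b / b <= a => [hwlog ha hb|ha hb].
  have /orP[ab|ba] := real_leVge (ger0_real ha) (ger0_real hb); last exact: hwlog.
  by rewrite distrC (distrC a); exact: hwlog.
set u := sqrtC a; set v := sqrtC b.
have v_ge0 : 0 <= v by rewrite sqrtC_ge0.
have vu : v <= u by rewrite ler_sqrtC // nnegrE.
have uv_ge0 : 0 <= u - v by rewrite subr_ge0.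
rewrite ger0_norm // ger0_norm ?subr_ge0 //.
rewrite -[u - v]sqrCK // ler_sqrtC ?nnegrE ?subr_ge0 ?exprn_ge0 //.
rewrite -[a]sqrtCK -[b]sqrtCK -/u -/v -subr_ge0.
rewrite (_ : _ - _ = 2 * v * (u - v)); last by ring.
by rewrite !mulr_ge0.
Qed.

Lemma sqrt_norm_ge0 z : 0 <= sqrt_norm z.
Proof. by rewrite sqrtC_ge0. Qed.

Lemma sqrt_norm0 : sqrt_norm 0 = 0.
Proof. by rewrite /sqrt_norm normr0 sqrtC0. Qed.

Lemma sqrt_norm_eq0 z : (sqrt_norm z == 0) = (z == 0).
Proof. by rewrite /sqrt_norm sqrtC_eq0 normr_eq0. Qed.

Lemma sqrt_normK z : sqrt_norm z * sqrt_sgn z = z.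
Proof.
rewrite /sqrt_sgn; have [->|z0] := eqVneq z 0; first by rewrite mul0r mulr0.
by rewrite mulrC mulfVK // sqrt_norm_eq0.
Qed.

Lemma sqrt_sgn_eq0 z : (sqrt_sgn z == 0) = (z == 0).
Proof.
by rewrite /sqrt_sgn mulf_eq0 invr_eq0 sqrt_norm_eq0 orbb.
Qed.

Lemma norm_sqrt_sgn z : `|sqrt_sgn z| = sqrt_norm z.
Proof.
rewrite /sqrt_sgn normf_div (ger0_norm (sqrt_norm_ge0 z)).
rewrite -[X in X / _]sqrtCK -/(sqrt_norm z).
have [->|nz] := eqVneq (sqrt_norm z) 0; first by rewrite expr2 !mul0r.
by rewrite expr2 mulfK.
Qed.

Lemma sqrt_norm_continuous : continuous (sqrt_norm : C^o -> C^o).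
Proof.
move=> w; apply/(@cvgrPdist_lt _ _ _ _ (@nbhs_filter (C^o : topologicalType) w)).
move=> e e0; have e2_gt0 : 0 < e ^+ 2 by rewrite exprn_gt0.
have : \forall z \near (w : C^o), `|w - z| < e ^+ 2.
  by apply/nbhs_normP; exists (e ^+ 2).
apply: filterS => z wz; rewrite /sqrt_norm.
have := @sqrtC_dist `|(w : C)| `|(z : C)| (normr_ge0 _) (normr_ge0 _).
move/le_lt_trans; apply.
apply: (@le_lt_trans _ _ (sqrtC `|w - z|)).
  by rewrite ler_sqrtC ?nnegrE ?normr_ge0 // ler_dist_dist.
by rewrite -[e]sqrCK ?ltW // ltr_sqrtC ?nnegrE ?normr_ge0 ?exprn_ge0 ?ltW.
Qed.

Lemma sqrt_sgn_continuous : continuous (sqrt_sgn : C^o -> C^o).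
Proof.
move=> w; have FF := @nbhs_filter (C^o : topologicalType) w.
have [w0|w_neq0] := eqVneq w 0.
  (* |sqrt_sgn z| = sqrt_norm z, which tends to sqrt_norm 0 = 0. *)
  rewrite w0 in FF *; apply/(@cvgrPdist_lt _ _ _ _ FF) => e e0.
  have := @cvgr_dist_lt _ _ _ _ FF _ _ (@sqrt_norm_continuous 0) _ e0.
  apply: filterS => z; rewrite /sqrt_sgn mul0r sqrt_norm0 !sub0r !normrN.
  by rewrite -/(sqrt_sgn z) norm_sqrt_sgn ger0_norm // sqrt_norm_ge0.
have nw : sqrt_norm w != 0 by rewrite sqrt_norm_eq0.
apply: (@cvgM _ _ _ FF id (fun z => (sqrt_norm z)^-1)); first exact: cvg_id.
exact: (@cvgV _ _ _ FF sqrt_norm _ nw (@sqrt_norm_continuous w)).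
Qed.

End SqrtFactorisation.

Section CharacterOnMonomials.
Variables (R : realType) (X : topologicalType) (s si : X -> X).
Variable omega : (int -> X -> R[i]) -> R[i].
Hypothesis omega_mul : forall F G, in_comm00 s si F -> in_comm00 s si G ->
  omega (c00_mul s si F G) = omega F * omega G.
Variable x : X.
Hypothesis omega_x : forall f : X -> R[i], continuous (f : X -> (R[i])^o) ->
  omega (mono f 0) = f x.

Lemma omega_mono_mull (g f : X -> R[i]) k :
  continuous (g : X -> (R[i])^o) -> continuous (f : X -> (R[i])^o) ->
  supp f `<=` Fixk s si k ->
  omega (mono (fun y => g y * f y) k) = g x * omega (mono f k).
Proof.
move=> gc fc fs; rewrite -(c00_mul_mono0l s si) omega_mul; first by rewrite omega_x.
- exact: in_comm00_mono gc (supp_Fixk0 s si g).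
- exact: in_comm00_mono fc fs.
Qed.

Lemma omega_mono_eq0 (f : X -> R[i]) k :
  continuous (f : X -> (R[i])^o) -> supp f `<=` Fixk s si k -> f x = 0 ->
  omega (mono f k) = 0.
Proof.
move=> fc fs fx0.
have fK : mono f k = mono (fun y => sqrt_norm (f y) * sqrt_sgn (f y)) k.
  by congr mono; apply/funext => y; rewrite sqrt_normK.
rewrite fK omega_mono_mull; first by rewrite fx0 sqrt_norm0 mul0r.
- by move=> y; apply: continuous_comp (fc y) (@sqrt_norm_continuous _ _).
- by move=> y; apply: continuous_comp (fc y) (@sqrt_sgn_continuous _ _).
- by apply: subset_trans fs; apply: closureS => y /=; rewrite sqrt_sgn_eq0.
Qed.

Lemma omega_mono_cross (f g : X -> R[i]) k :
  continuous (f : X -> (R[i])^o) -> supp f `<=` Fixk s si k ->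
  continuous (g : X -> (R[i])^o) -> supp g `<=` Fixk s si k ->
  f x * omega (mono g k) = g x * omega (mono f k).
Proof.
move=> fc fs gc gs; rewrite -omega_mono_mull // -omega_mono_mull //.
by congr (omega (mono _ k)); apply/funext => y; rewrite mulrC.
Qed.

Lemma omega_mono_coef k : exists c : R[i], forall f : X -> R[i],
  continuous (f : X -> (R[i])^o) -> supp f `<=` Fixk s si k ->
  omega (mono f k) = c * f x.
Proof.
have [[f0 [f0c f0s f0x]]|no_f0] := pselect (exists f0 : X -> R[i],
    [/\ continuous (f0 : X -> (R[i])^o), supp f0 `<=` Fixk s si k & f0 x != 0]).
  exists (omega (mono f0 k) / f0 x) => f fc fs; apply: (mulfI f0x).
  by rewrite omega_mono_cross // mulrA [f0 x * _]mulrC mulfVK // mulrC.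
exists 0 => f fc fs; rewrite mul0r omega_mono_eq0 //.
by apply/eqP; apply: contra_notT no_f0 => fx; exists f.
Qed.

End CharacterOnMonomials.

Theorem lemma3p1 (R : realType) (X : topologicalType)
  (X_hausdorff : hausdorff_space X) (X_compact : compact [set: X])
  (X_nonempty : [set: X] !=set0)
  (s si : X -> X) (s_cont : continuous s) (si_cont : continuous si)
  (s_si : cancel s si) (si_s : cancel si s)
  (omega : (int -> X -> R[i]) -> R[i])
  (omega_add : forall F G, in_comm00 s si F -> in_comm00 s si G ->
     omega (c00_add F G) = omega F + omega G)
  (omega_scale : forall (a : R[i]) F, in_comm00 s si F ->
     omega (c00_scale a F) = a * omega F)
  (omega_mul : forall F G, in_comm00 s si F -> in_comm00 s si G ->
     omega (c00_mul s si F G) = omega F * omega G)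
  (omega_nz : exists F, in_comm00 s si F /\ omega F != 0)
  (x : X)
  (omega_x : forall f : X -> R[i], continuous (f : X -> (R[i])^o) -> omega (mono f 0) = f x) :
  exists c : int -> R[i], c 0 = 1 /\
    forall (k : int) (f : X -> R[i]), continuous (f : X -> (R[i])^o) ->
      supp f `<=` Fixk s si k -> omega (mono f k) = c k * f x.
Proof.
have [c omega_monoE] := choice (omega_mono_coef omega_mul omega_x).
exists c; split; last exact: omega_monoE.
have cst1_cont : continuous ((fun=> 1) : X -> (R[i])^o) := @cst_continuous _ (R[i]^o) 1.
have := omega_monoE 0 _ cst1_cont (supp_Fixk0 s si _).
by rewrite omega_x // mulr1.
Qed.
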